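(* (a) For every real number $M>0$ there exist connected graphs $H$ and $G$ with $H$ a subgraph of $G$ such that $\frac{\textnormal{sdim}(H)}{\textnormal{sdim}(G)}>M$. (b) Let $G$ and $H$ be connected graphs. If $H_{\rm SR}$ is a subgraph of $G_{\rm SR}$, then $\textnormal{sdim}(H)\le \textnormal{sdim}(G)$.
   Context: All graphs are finite, simple and undirected; $d(x,y)$ is the shortest-path distance. A set $S\subseteq V(G)$ is a strong resolving set of a connected graph $G$ if for all distinct $x,y\in V(G)$ there exists $z\in S$ such that $x$ lies on a $y$–$z$ geodesic or $y$ lies on an $x$–$z$ geodesic; $\textnormal{sdim}(G)$ is the minimum cardinality of a strong resolving set. A vertex $u$ is maximally distant from $v$ if $d(u,v)\ge d(w,v)$ for every neighbor $w$ of $u$; $u$ and $v$ are mutually maximally distant (MMD) if each is maximally distant from the other. The strong resolving graph $G_{\rm SR}$ has vertex set $\{x\in V(G): x \text{ is MMD with some } y\in V(G)\}$, and $uv$ is an edge of $G_{\rm SR}$ iff $u$ and $v$ are MMD in $G$. *)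

From mathcomp Require Import all_boot.
Set Implicit Arguments. Unset Strict Implicit. Unset Printing Implicit Defensive.

Definition simple_graph (T : finType) (e : rel T) : Prop :=
  irreflexive e /\ symmetric e.

Definition connected_graph (T : finType) (e : rel T) : Prop :=
  simple_graph e /\ forall x y : T, connect e x y.

Fixpoint ball (T : finType) (e : rel T) (n : nat) (x : T) : {set T} :=
  match n with
  | 0 => [set x]
  | n'.+1 => ball e n' x :|: [set y | [exists z in ball e n' x, e z y]]
  end.

(* shortest-path distance (equals #|T| if y is unreachable, which never
   happens in a connected graph) *)
Definition dist (T : finType) (e : rel T) (x y : T) : nat :=
  find (fun n => y \in ball e n x) (iota 0 #|T|).

Definition on_geodesic (T : finType) (e : rel T) (x y z : T) : bool :=
  dist e y z == dist e y x + dist e x z.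

Definition strong_resolving (T : finType) (e : rel T) (S : {set T}) : bool :=
  [forall x, forall y, (x != y) ==>
     [exists z in S, on_geodesic e x y z || on_geodesic e y x z]].

(* sdim: minimum cardinality of a strong resolving set
   ([set: T] is always strong resolving, taking z := x). *)
Definition sdim (T : finType) (e : rel T) : nat :=
  #| [arg min_(S < [set: T] | strong_resolving e S) #|S| ] |.

Definition max_distant (T : finType) (e : rel T) (u v : T) : bool :=
  [forall w, e u w ==> (dist e w v <= dist e u v)].

(* mutually maximally distant (distinct) vertices = edges of G_SR *)
Definition mmd (T : finType) (e : rel T) (u v : T) : bool :=
  (u != v) && max_distant e u v && max_distant e v u.

Definition SR_vertex (T : finType) (e : rel T) (x : T) : bool :=
  [exists y, mmd e x y].

(* (the isomorphism type of) G1 is a subgraph of G2 *)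
Definition subgraph (T1 T2 : finType) (e1 : rel T1) (e2 : rel T2) : Prop :=
  exists f : T1 -> T2, injective f /\ forall x y, e1 x y -> e2 (f x) (f y).

Definition SR_subgraph (T1 T2 : finType) (e1 : rel T1) (e2 : rel T2) : Prop :=
  exists f : T1 -> T2,
    {in SR_vertex e1 &, injective f} /\
    (forall x, SR_vertex e1 x -> SR_vertex e2 (f x)) /\
    (forall x y, mmd e1 x y -> mmd e2 (f x) (f y)).

(* A set S is strongly resolving iff it contains an end of every pair of
   mutually maximally distant vertices, i.e. iff it is a vertex cover of G_SR.
   One direction: nothing lies beyond a maximally distant vertex on a geodesic.
   For the other, given x <> y, let u be a vertex farthest from y such that x
   lies on a y-u geodesic, and v a vertex farthest from u such that y lies on
   a u-v geodesic; geodesics through x or y extend along any edge leading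
   farther away, so u and v are MMD, and either of them strongly resolves x, y.
   Thus sdim G is the vertex cover number of G_SR, and (b) follows by pulling a
   cover of G_SR back along the embedding of H_SR.
   For (a), the comb (the path P_(n+1) with a pendant leaf at every vertex) is
   a spanning subgraph of the ladder P_(n+1) x K_2.  Two end vertices of a rung
   strongly resolve the ladder, while the n+1 leaves of the comb are pairwise
   MMD, so the sdim of the comb is at least n. *)

From Pilot Require Import Defs.
From mathcomp Require Import all_boot zify.
From Stdlib Require Import Reals Lra.
Set Implicit Arguments. Unset Strict Implicit.

(* [Reals] also exports a [dist]. *)
Local Notation dist := Defs.dist.

Definition vertex_cover (T : finType) (r : rel T) (S : {set T}) : Prop :=
  forall u v, r u v -> (u \in S) || (v \in S).

Section ConnectedGraph.
Variables (T : finType) (e : rel T).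
Hypothesis e_sym : symmetric e.

Lemma potential_connect (x0 : T) (pot : T -> nat) :
  (forall y, pot y = 0 -> y = x0) ->
  (forall y k, pot y = k.+1 -> exists z, e z y /\ pot z = k) ->
  forall x y, connect e x y.
Proof.
move=> pot0 potS.
have from_x0 y : connect e x0 y.
  move Hk : (pot y) => k; elim: k y Hk => [|k IH] y Hk.
    by rewrite (pot0 _ Hk) connect0.
  have [z [ezy pz]] := potS _ _ Hk.
  exact: connect_trans (IH _ pz) (connect1 ezy).
by move=> x y; apply: connect_trans (from_x0 y); rewrite (sym_connect_sym e_sym).
Qed.

Lemma in_ballS n x y :
  (y \in ball e n.+1 x) = (y \in ball e n x) || [exists z in ball e n x, e z y].
Proof. by rewrite /= in_setU in_set. Qed.

Lemma path_last_in_ball x p : path e x p -> last x p \in ball e (size p) x.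
Proof.
elim/last_ind: p => [|p a IH]; first by rewrite in_set1.
rewrite rcons_path last_rcons size_rcons in_ballS => /andP [/IH xp ea].
by apply/orP; right; apply/existsP; exists (last x p); rewrite xp.
Qed.

Hypothesis e_conn : forall x y : T, connect e x y.

Lemma has_ball x y : has (fun n => y \in ball e n x) (iota 0 #|T|).
Proof.
have /connectP [p xp ->] := e_conn x y.
case/shortenP: xp => q xq uq _; apply/hasP; exists (size q).
  rewrite mem_iota /=; change (size (x :: q) <= #|T|).
  by rewrite -(card_uniqP uq) max_card.
exact: path_last_in_ball.
Qed.

Lemma dist_lt_card x y : dist e x y < #|T|.
Proof. by rewrite -[#|T|](size_iota 0) -has_find has_ball. Qed.

Lemma mem_ball_dist x y : y \in ball e (dist e x y) x.
Proof. by have := nth_find 0 (has_ball x y); rewrite nth_iota ?dist_lt_card. Qed.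

Lemma dist_ball x y n : y \in ball e n x -> dist e x y <= n.
Proof.
move=> yn; rewrite leqNgt; apply/negP => lt_n.
have := before_find 0 lt_n; rewrite nth_iota ?yn //.
exact: ltn_trans (dist_lt_card x y).
Qed.

Lemma dist_xx x : dist e x x = 0.
Proof. by apply/eqP; rewrite -leqn0 dist_ball // in_set1. Qed.

Lemma dist_eq0 x y : dist e x y = 0 -> y = x.
Proof. by move=> d0; have := mem_ball_dist x y; rewrite d0 in_set1 => /eqP. Qed.

Lemma dist_edge x y z : e y z -> dist e x z <= (dist e x y).+1.
Proof.
move=> eyz; apply: dist_ball; rewrite in_ballS; apply/orP; right.
by apply/existsP; exists y; rewrite eyz mem_ball_dist.
Qed.

Lemma dist_predr x y k : dist e x y = k.+1 -> exists z, e z y /\ dist e x z = k.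
Proof.
move=> dk; have := mem_ball_dist x y; rewrite dk in_ballS => /orP [yk|].
  by have := dist_ball yk; rewrite dk ltnn.
case/existsP => z /andP [zk ezy]; exists z; split => //.
have := dist_ball zk; have := dist_edge x ezy; lia.
Qed.

Lemma dist_triangle x y z : dist e x z <= dist e x y + dist e y z.
Proof.
move Hk : (dist e y z) => k; elim: k z Hk => [|k IH] z Hk.
  by rewrite (dist_eq0 Hk) addn0.
have [w [ewz dw]] := dist_predr Hk.
have := IH w dw; have := dist_edge x ewz; lia.
Qed.

Lemma dist_sym x y : dist e x y = dist e y x.
Proof.
wlog suff le_yx : x y / dist e y x <= dist e x y.
  by apply/eqP; rewrite eqn_leq !le_yx.
move Hk : (dist e x y) => k; elim: k y Hk => [|k IH] y Hk.
  by rewrite (dist_eq0 Hk) dist_xx.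
have [z [ezy dz]] := dist_predr Hk.
have := IH z dz; have := dist_triangle y z x.
have := @dist_edge y y z; rewrite e_sym ezy dist_xx; lia.
Qed.

Lemma dist_predl x y k : dist e x y = k.+1 -> exists z, e x z /\ dist e z y = k.
Proof.
rewrite dist_sym => /dist_predr [z [ezx dz]].
by exists z; rewrite e_sym ezx dist_sym.
Qed.

Lemma dist_potential x (f : T -> nat) :
  f x = 0 -> (forall y, f y = 0 -> y = x) ->
  (forall y z, e z y -> f y <= (f z).+1) ->
  (forall y k, f y = k.+1 -> exists z, e z y /\ f z = k) ->
  forall y, dist e x y = f y.
Proof.
move=> fx0 f0 f_edge f_pred y; apply/eqP; rewrite eqn_leq; apply/andP; split.
  move Hk : (f y) => k; elim: k y Hk => [|k IH] y Hk.
    by rewrite (f0 _ Hk) dist_xx.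
  have [z [ezy fz]] := f_pred _ _ Hk.
  have := IH _ fz; have := dist_edge x ezy; lia.
move Hk : (dist e x y) => k; elim: k y Hk => [|k IH] y Hk.
  by rewrite (dist_eq0 Hk) fx0.
have [z [ezy dz]] := dist_predr Hk.
have := IH _ dz; have := f_edge _ _ ezy; lia.
Qed.

Lemma max_distantP u v :
  reflect (forall w, e u w -> dist e w v <= dist e u v) (max_distant e u v).
Proof.
apply: (iffP forallP) => [md w euw | md w]; first exact: implyP (md w) euw.
by apply/implyP; apply: md.
Qed.

Lemma mmd_sym u v : mmd e u v = mmd e v u.
Proof. by rewrite /mmd eq_sym andbAC -andbA andbC -andbA andbA. Qed.

Lemma strong_resolvingP (S : {set T}) :
  reflect (forall x y, x != y ->
             exists2 z, z \in S & on_geodesic e x y z || on_geodesic e y x z)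
          (strong_resolving e S).
Proof.
apply: (iffP forallP) => [sr x y nxy | sr x].
  by have /forallP /(_ y) /implyP /(_ nxy) /exists_inP := sr x.
by apply/forallP => y; apply/implyP => /(sr x y) /exists_inP.
Qed.

Lemma max_distant_geodesic u v z :
  max_distant e u v -> on_geodesic e u v z -> z = u.
Proof.
move=> /max_distantP md /eqP geo; move Hk : (dist e u z) geo => k.
case: k Hk => [|k] Hk geo; first exact: dist_eq0.
have [w [euw dw]] := dist_predl Hk.
move: geo (md w euw) (dist_triangle v w z).
rewrite (dist_sym v w) (dist_sym v u); lia.
Qed.

Lemma geodesic_extend v y u w :
  e u w -> on_geodesic e y v u -> dist e v u < dist e v w ->
  on_geodesic e y v w /\ dist e y u < dist e y w.
Proof.
move=> euw /eqP geo farther; rewrite /on_geodesic.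
have := dist_edge v euw; have := dist_edge y euw; have := dist_triangle v y w.
split; [apply/eqP|]; lia.
Qed.

Lemma strong_resolving_cover S : strong_resolving e S -> vertex_cover (mmd e) S.
Proof.
move=> /strong_resolvingP sr u v /andP [/andP [nuv muv] mvu].
have [z zS /orP [geo | geo]] := sr u v nuv.
  by rewrite -(max_distant_geodesic muv geo) zS.
by rewrite -(max_distant_geodesic mvu geo) zS orbT.
Qed.

Lemma farthest_pair_mmd x y u v : x != y ->
  on_geodesic e x y u -> (forall w, on_geodesic e x y w -> dist e y w <= dist e y u) ->
  on_geodesic e y u v -> (forall w, on_geodesic e y u w -> dist e u w <= dist e u v) ->
  mmd e u v.
Proof.
move=> nxy x_yu u_max y_uv v_max.
rewrite /mmd; apply/andP; split; first (apply/andP; split).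
- apply: contraNneq nxy => uv; move: y_uv; rewrite /on_geodesic -uv dist_xx.
  rewrite eq_sym addn_eq0 => /andP [/eqP /dist_eq0 yu _].
  move: x_yu; rewrite /on_geodesic yu dist_xx eq_sym addn_eq0.
  by case/andP => /eqP /dist_eq0 ->.
- apply/max_distantP => w euw; rewrite leqNgt; apply/negP => farther.
  have y_vu : on_geodesic e y v u.
    move: y_uv; rewrite /on_geodesic (dist_sym v u) (dist_sym v y).
    by rewrite (dist_sym y u) addnC.
  rewrite (dist_sym w) (dist_sym u) in farther.
  have [_ farther_y] := geodesic_extend euw y_vu farther.
  have [x_yw _] := geodesic_extend euw x_yu farther_y.
  by have := u_max w x_yw; rewrite leqNgt farther_y.
- apply/max_distantP => w evw; rewrite leqNgt; apply/negP => farther.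
  rewrite (dist_sym w) (dist_sym v) in farther.
  have [y_uw _] := geodesic_extend evw y_uv farther.
  by have := v_max w y_uw; rewrite leqNgt farther.
Qed.

Lemma cover_strong_resolving S : vertex_cover (mmd e) S -> strong_resolving e S.
Proof.
move=> cover; apply/strong_resolvingP => x y nxy.
have x_geo : on_geodesic e x y x by rewrite /on_geodesic dist_xx addn0.
case: (arg_maxnP (dist e y) x_geo) => u x_yu u_max.
have y_geo : on_geodesic e y u y by rewrite /on_geodesic dist_xx addn0.
case: (arg_maxnP (dist e u) y_geo) => v y_uv v_max.
have /orP [uS | vS] := cover u v (farthest_pair_mmd nxy x_yu u_max y_uv v_max).
  by exists u; rewrite ?uS ?x_yu.
exists v; rewrite // /on_geodesic orbC; apply/orP; left; apply/eqP.
move: x_yu y_uv (dist_triangle u x v) (dist_triangle x y v) => /eqP + /eqP.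
rewrite (dist_sym y u) (dist_sym y x) (dist_sym x u); lia.
Qed.

Lemma strong_resolvingT : strong_resolving e [set: T].
Proof.
apply/strong_resolvingP => x y _; exists x; rewrite ?in_setT //.
by rewrite /on_geodesic dist_xx addn0 eqxx.
Qed.

Lemma sdim_witness : exists2 S, strong_resolving e S & sdim e = #|S|.
Proof.
by rewrite /sdim; case: arg_minnP; [exact: strong_resolvingT | move=> S; exists S].
Qed.

Lemma sdim_min S : strong_resolving e S -> sdim e <= #|S|.
Proof.
by rewrite /sdim; case: arg_minnP; [exact: strong_resolvingT | move=> ? _; apply].
Qed.

Lemma sdim_gt0 (x y : T) : x != y -> 0 < sdim e.
Proof.
have [S /strong_resolvingP sr ->] := sdim_witness.
by move=> /(sr x y) [z zS _]; apply/card_gt0P; exists z.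
Qed.

Lemma leaf_max_distant u v :
  (forall w w', e u w -> e u w' -> w = w') -> v != u -> max_distant e u v.
Proof.
move=> leaf nvu; apply/max_distantP => w euw.
move Hk : (dist e u v) => k; case: k Hk => [|k] Hk.
  by move: nvu; rewrite (dist_eq0 Hk) eqxx.
by have [w0 [euw0 <-]] := dist_predl Hk; rewrite (leaf _ _ euw euw0).
Qed.

End ConnectedGraph.

Lemma sdim_SR_subgraph (TG TH : finType) (eG : rel TG) (eH : rel TH) :
  connected_graph eG -> connected_graph eH -> SR_subgraph eH eG ->
  sdim eH <= sdim eG.
Proof.
case=> [[_ symG] connG] [[_ symH] connH] [f [f_inj [_ f_mmd]]].
have [S /(strong_resolving_cover symG connG) coverS ->] := sdim_witness connG.
pose S' := [set x | SR_vertex eH x && (f x \in S)].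
have coverS' : vertex_cover (mmd eH) S'.
  move=> u v muv; rewrite !inE.
  have SRu : SR_vertex eH u by apply/existsP; exists v.
  have SRv : SR_vertex eH v by apply/existsP; exists u; rewrite mmd_sym.
  by rewrite SRu SRv; apply/coverS/f_mmd.
apply: leq_trans (sdim_min connH (cover_strong_resolving symH connH coverS')) _.
rewrite -(@card_in_imset _ _ f); last first.
  by move=> a b; rewrite !inE => /andP [SRa _] /andP [SRb _]; apply: f_inj.
by apply/subset_leq_card/subsetP => y /imsetP [x]; rewrite inE => /andP [_ fx] ->.
Qed.

Lemma clique_cover_card (T : finType) (r : rel T) (A S : {set T}) :
  {in A &, forall u v, u != v -> r u v} -> vertex_cover r S -> #|A| <= #|S|.+1.
Proof.
move=> clique cover.
have outside : #|A :\: S| <= 1.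
  rewrite leqNgt; apply/negP => /card_gt1P [u [v [uA vA nuv]]].
  move: uA vA; rewrite !inE => /andP [uS uA] /andP [vS vA].
  by have := cover u v (clique u v uA vA nuv); rewrite (negbTE uS) (negbTE vS).
have := cardsID S A; have := subset_leq_card (subsetIr A S); lia.
Qed.

Definition path_adj n : rel 'I_n := fun i j => (i.+1 == j) || (j.+1 == i).

Lemma path_adj_toward n (i j : 'I_n) : i != j ->
  exists2 j', path_adj j' j & (i - j') + (j' - i) = ((i - j) + (j - i)).-1.
Proof.
rewrite -val_eqE /= => nij; case: (ltnP j i) => [ji | ij].
  have jn : j.+1 < n by exact: leq_ltn_trans ji (ltn_ord i).
  by exists (Ordinal jn); rewrite /path_adj /= ?eqxx ?orbT //; lia.
have jn : j.-1 < n by exact: leq_ltn_trans (leq_pred j) (ltn_ord j).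
by exists (Ordinal jn); rewrite /path_adj /=; lia.
Qed.

(* Vertex (i, b) is the i-th vertex of the path on side b; in the comb only
   side [false] carries path edges, so the (i, true) are its leaves. *)
Definition ladder n : rel ('I_n.+1 * bool) := fun x y =>
  ((x.1 == y.1) && (x.2 != y.2)) || ((x.2 == y.2) && path_adj x.1 y.1).

Definition comb n : rel ('I_n.+1 * bool) := fun x y =>
  ((x.1 == y.1) && (x.2 != y.2)) || [&& ~~ x.2, ~~ y.2 & path_adj x.1 y.1].

Arguments ladder : clear implicits.
Arguments comb : clear implicits.

Definition ladder_dist n (x y : 'I_n.+1 * bool) : nat :=
  (x.1 - y.1) + (y.1 - x.1) + (x.2 != y.2).

Lemma ladder_simple n : simple_graph (ladder n).
Proof.
split=> [[i a] | [i a] [j b]]; rewrite /ladder /path_adj /= -?val_eqE /=.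
  by rewrite eqxx /=; lia.
by case: a; case: b => /=; apply/idP/idP; lia.
Qed.

Lemma comb_simple n : simple_graph (comb n).
Proof.
split=> [[i a] | [i a] [j b]]; rewrite /comb /path_adj /= -?val_eqE /=.
  by rewrite eqxx /=; lia.
by case: a; case: b => /=; apply/idP/idP; lia.
Qed.

Lemma comb_subgraph n : subgraph (comb n) (ladder n).
Proof.
exists idfun; split=> // [[i a] [j b]]; rewrite /comb /ladder /path_adj /= -?val_eqE /=.
by case: a; case: b => /=; lia.
Qed.

Lemma ladder_dist_eq0 n (x y : 'I_n.+1 * bool) : ladder_dist x y = 0 -> y = x.
Proof.
case: x y => [i a] [j b]; rewrite /ladder_dist /= => d0.
have ji : j = i by apply: val_inj => /=; lia.
by rewrite ji; case: a b d0 => [] [] //=; rewrite addn1.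
Qed.

Lemma ladder_dist_edge n (x y z : 'I_n.+1 * bool) :
  ladder n z y -> ladder_dist x y <= (ladder_dist x z).+1.
Proof.
case: x y z => [i a] [j b] [k c]; rewrite /ladder /ladder_dist /path_adj /= -?val_eqE /=.
by case: a; case: b; case: c => /=; lia.
Qed.

Lemma ladder_dist_pred n (x y : 'I_n.+1 * bool) k : ladder_dist x y = k.+1 ->
  exists z, ladder n z y /\ ladder_dist x z = k.
Proof.
case: x y => [i a] [j b]; rewrite /ladder_dist /=.
have [<- | nab] := eqVneq a b; last first.
  by exists (j, a); rewrite /ladder /= eqxx nab; split=> //; lia.
rewrite /= addn0 => dk.
have [|j' adj dj'] := @path_adj_toward _ i j; first by rewrite -val_eqE /=; lia.
by exists (j', a); rewrite /ladder /= eqxx adj orbT addn0 dj' dk.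
Qed.

Lemma ladder_connected n : connected_graph (ladder n).
Proof.
split; first exact: ladder_simple.
apply: (@potential_connect _ _ _ (ord0, false) (ladder_dist (ord0, false))).
- by have [] := ladder_simple n.
- by move=> y /ladder_dist_eq0.
- exact: ladder_dist_pred.
Qed.

Lemma dist_ladder n (x y : 'I_n.+1 * bool) : dist (ladder n) x y = ladder_dist x y.
Proof.
have [_ conn] := ladder_connected n.
apply: dist_potential => //; last exact: ladder_dist_pred.
- by rewrite /ladder_dist !subnn eqxx.
- by move=> z /ladder_dist_eq0.
- by move=> z w; apply: ladder_dist_edge.
Qed.

(* For x = (i, a) and y = (j, b) with i <= j, x lies on a geodesic from y to (0, a). *)
Lemma ladder_strong_resolving n :
  strong_resolving (ladder n) [set (ord0, false); (ord0, true)].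
Proof.
have rung c : (ord0, c) \in [set (@ord0 n, false); (ord0, true)].
  by rewrite !inE; case: c.
apply/strong_resolvingP => [[i a] [j b] _].
case: (leqP i j) => ij; [exists (ord0, a) | exists (ord0, b)] => //;
  rewrite /on_geodesic !dist_ladder /ladder_dist /=.
  by case: a; case: b => /=; apply/orP; left; apply/eqP; lia.
by case: a; case: b => /=; apply/orP; right; apply/eqP; lia.
Qed.

Lemma sdim_ladder n : 0 < sdim (ladder n) <= 2.
Proof.
have [[_ _] conn] := ladder_connected n.
rewrite (@sdim_gt0 _ _ conn (ord0, false) (ord0, true)) //=.
by apply: leq_trans (sdim_min conn (ladder_strong_resolving n)) _; rewrite cards2.
Qed.

Lemma comb_connected n : connected_graph (comb n).
Proof.
split; first exact: comb_simple.
apply: (@potential_connect _ _ _ (ord0, false) (fun y => y.1 + y.2)).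
- by have [] := comb_simple n.
- move=> [j b] /= j0; have -> : j = ord0 by apply: val_inj => /=; lia.
  by case: b j0 => //=; rewrite addn1.
move=> [j [|]] k /= jk.
  by exists (j, false); rewrite /comb /= eqxx; split=> //; lia.
have [|j' adj dj'] := @path_adj_toward _ ord0 j; first by rewrite -val_eqE /=; lia.
by exists (j', false); rewrite /comb /= adj orbT; split=> //; move: dj' => /=; lia.
Qed.

Lemma comb_leaf n (i : 'I_n.+1) w : comb n (i, true) w -> w = (i, false).
Proof. by case: w => j [|]; rewrite /comb /= ?andbF ?andbT orbF // => /eqP <-. Qed.

Lemma sdim_comb n : n <= sdim (comb n).
Proof.
have [[_ sym] conn] := comb_connected n.
have [S /(strong_resolving_cover sym conn) cover ->] := sdim_witness conn.
pose leaves := [set (i, true) | i : 'I_n.+1].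
have card_leaves : #|leaves| = n.+1.
  by rewrite card_imset ?card_ord // => i j [].
suff : #|leaves| <= #|S|.+1 by rewrite card_leaves.
apply: clique_cover_card cover.
move=> _ _ /imsetP [i _ ->] /imsetP [j _ ->] nij.
have leaf k : forall w w', comb n (k, true) w -> comb n (k, true) w' -> w = w'.
  by move=> w w' /comb_leaf -> /comb_leaf ->.
by rewrite /mmd nij !(leaf_max_distant sym conn (leaf _)) // eq_sym.
Qed.

Lemma lt_ratio (M a b : R) :
  (0 < M)%R -> (0 < b <= 2)%R -> (2 * M < a)%R -> (M < a / b)%R.
Proof.
move=> M0 [b0 b2] Ma; apply: (Rmult_lt_reg_r b) => //.
by rewrite /Rdiv Rmult_assoc Rinv_l ?Rmult_1_r; [nra | lra].
Qed.

Theorem mainTheorem1 :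
  (forall M : R, (0 < M)%R ->
     exists (TH TG : finType) (eH : rel TH) (eG : rel TG),
       [/\ connected_graph eH, connected_graph eG, subgraph eH eG,
           (0 < sdim eG)%N &
           (M < INR (sdim eH) / INR (sdim eG))%R])
  /\
  (forall (TG TH : finType) (eG : rel TG) (eH : rel TH),
     connected_graph eG -> connected_graph eH ->
     SR_subgraph eH eG -> (sdim eH <= sdim eG)%N).
Proof.
split; last exact: sdim_SR_subgraph.
move=> M M0; have [n n_gt] := INR_unbounded (2 * M)%R.
have /andP [ladder_gt0 ladder_le2] := sdim_ladder n.
exists _, _, (comb n), (ladder n); split=> //.
- exact: comb_connected.
- exact: ladder_connected.
- exact: comb_subgraph.
apply: lt_ratio => //.
- split; first exact/lt_0_INR/ltP.
  by apply: (@le_INR _ 2); apply/leP.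
- by apply: Rlt_le_trans n_gt _; apply/le_INR/leP/sdim_comb.
Qed.
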